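(* Let $\mathfrak{s}$ be a binary word over $\{\mathsf{A},\mathsf{B}\}$ that is either empty or ends with the letter $\mathsf{B}$, and let $n\ge 0$ be an integer. Then \[ \max_{|\mathfrak{t}|=n} \mathsf{P}(\mathfrak{s}\circ\mathfrak{t}) = \mathsf{P}(\mathfrak{s}\circ\mathfrak{z}_n), \] where the maximum is over all binary words $\mathfrak{t}$ of length $n$. Moreover, if $\mathfrak{s}$ is nonempty, then $\mathfrak{t}=\mathfrak{z}_n$ is the only word of length $n$ attaining this maximum.
   Context: $\circ$ denotes concatenation, $|\mathfrak{t}|$ the length of $\mathfrak{t}$. $\mathsf{P}(\mathfrak{w})$ is the number of distinct words that are subsequences (not necessarily contiguous) of $\mathfrak{w}$, the empty word included. $\mathfrak{z}_n$ denotes the alternating word $\mathsf{ABAB}\ldots$ of length $n$ starting with $\mathsf{A}$ (so $\mathfrak{z}_0$ is empty). *)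

From mathcomp Require Import all_boot.
Set Implicit Arguments. Unset Strict Implicit. Unset Printing Implicit Defensive.

Definition letA : bool := false.
Definition letB : bool := true.

Fixpoint subseqs (w : seq bool) : seq (seq bool) :=
  match w with
  | [::] => [:: [::]]
  | x :: w' => subseqs w' ++ map (cons x) (subseqs w')
  end.

Definition P (w : seq bool) : nat := size (undup (subseqs w)).

(* z_n = ABAB... of length n, starting with A. *)
Definition z (n : nat) : seq bool := mkseq (fun i => odd i) n.

From mathcomp Require Import all_boot.
From mathcomp Require Import zify.

(* Let p - 1 and q - 1 be the numbers of distinct subsequences of a word that
   end with A and with B, so that P = p + q - 1.  Appending A turns (p, q) into
   (p + q, q) and appending B turns it into (p, p + q), since the new
   subsequences ending with the appended letter are all the old ones extended
   by it.  Starting from p <= q (the prefix is empty or ends with B), the final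
   p + q is maximised by always adding to the smaller coordinate, i.e. by
   alternating ABAB..., and strictly so when 0 < p < q; exchanging A and B swaps
   the coordinates, so each inductive step is a single monotonicity comparison.
   The counts are taken on the reversed word, where "ends with" becomes
   "starts with". *)

Lemma mem_map_cons (T : eqType) (x y : T) (v : seq T) (s : seq (seq T)) :
  (y :: v \in map (cons x) s) = (y == x) && (v \in s).
Proof.
by apply/mapP/andP => [[v' s_v' [-> ->]] | [/eqP-> s_v]]; [rewrite eqxx | exists v].
Qed.

Lemma mem_subseqs (w u : seq bool) : (u \in subseqs w) = subseq u w.
Proof.
elim: w u => [|x w IH] [|y v] //=; rewrite mem_cat IH ?sub0seq // mem_map_cons IH.
have [->|_] := eqVneq y x; last by rewrite orbF.
exact/orb_idl/cons_subseq.
Qed.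

Definition dsubseqs (w : seq bool) : seq (seq bool) := undup (subseqs w).

Lemma mem_dsubseqs (w u : seq bool) : (u \in dsubseqs w) = subseq u w.
Proof. by rewrite mem_undup mem_subseqs. Qed.

Lemma dsubseqs_uniq (w : seq bool) : uniq (dsubseqs w).
Proof. exact: undup_uniq. Qed.

Definition starts_with (c : bool) (u : seq bool) : bool := ohead u == Some c.

Definition nstart (c : bool) (w : seq bool) : nat :=
  count (starts_with c) (dsubseqs w).

Lemma size_by_head (s : seq (seq bool)) :
  size s = count_mem [::] s + count (starts_with false) s + count (starts_with true) s.
Proof. by elim: s => [|[|[] v] s IH] //=; rewrite IH !(add0n, add1n, addSn, addnS). Qed.

Lemma P_nstart (w : seq bool) : P w = (nstart false w + nstart true w).+1.
Proof.
rewrite /P -/(dsubseqs w) size_by_head /nstart.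
by rewrite count_uniq_mem ?dsubseqs_uniq // mem_dsubseqs sub0seq.
Qed.

Lemma nstart_cons (c : bool) (w : seq bool) : nstart c (c :: w) = P w.
Proof.
rewrite /nstart -size_filter /P -/(dsubseqs w) -(size_map (cons c) (dsubseqs w)).
apply/perm_size/uniq_perm; first exact: filter_uniq (dsubseqs_uniq _).
  by rewrite map_inj_uniq ?dsubseqs_uniq // => u v [].
case=> [|d v]; rewrite mem_filter; first by apply/esym/mapP => -[].
rewrite mem_map_cons !mem_dsubseqs /starts_with (inj_eq (@Some_inj _)) /=.
by case: eqVneq.
Qed.

Lemma nstart_cons_neq (c d : bool) (w : seq bool) :
  d != c -> nstart d (c :: w) = nstart d w.
Proof.
move=> /negbTE neq_dc; rewrite /nstart -!size_filter.
apply/perm_size/uniq_perm; try exact: filter_uniq (dsubseqs_uniq _).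
case=> [|e v]; rewrite !mem_filter // !mem_dsubseqs /starts_with (inj_eq (@Some_inj _)) /=.
by case: eqVneq => [->|]; rewrite ?neq_dc.
Qed.

Definition weight (c : bool) (w : seq bool) : nat := (nstart c w).+1.

Lemma P_weight (w : seq bool) : (P w).+1 = weight false w + weight true w.
Proof. by rewrite P_nstart /weight; lia. Qed.

Lemma weight_cons (c : bool) (w : seq bool) : weight c (c :: w) = (P w).+1.
Proof. by rewrite /weight nstart_cons. Qed.

Lemma weight_cons_neq (c d : bool) (w : seq bool) :
  d != c -> weight d (c :: w) = weight d w.
Proof. by move=> neq_dc; rewrite /weight nstart_cons_neq. Qed.

Lemma weight_rev_lt (s : seq bool) :
  last false s -> weight false (rev s) < weight true (rev s).
Proof.
case/lastP: s => [// | s c]; rewrite last_rcons rev_rcons => ->.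
by rewrite weight_cons_neq // weight_cons P_weight /weight; lia.
Qed.

Lemma P_rev (w : seq bool) : P (rev w) = P w.
Proof.
rewrite /P -!/(dsubseqs _) -(size_map rev (dsubseqs w)).
have rev_inj := can_inj (@revK bool).
apply/perm_size/uniq_perm; rewrite ?map_inj_uniq ?dsubseqs_uniq // => u.
by rewrite -{2}(revK u) mem_map // !mem_dsubseqs -subseq_rev revK.
Qed.

Fixpoint run (t : seq bool) (p q : nat) : nat :=
  if t is c :: t' then (if c then run t' p (p + q) else run t' (p + q) q)
  else p + q.

Lemma P_cat (s t : seq bool) :
  (P (s ++ t)).+1 = run t (weight false (rev s)) (weight true (rev s)).
Proof.
elim: t s => [|c t IH] s; first by rewrite cats0 /= -P_weight P_rev.
rewrite -cat_rcons IH rev_rcons /=.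
by case: c; rewrite weight_cons weight_cons_neq // P_weight.
Qed.

Lemma leq_run (t : seq bool) {p q p' q' : nat} :
  p <= p' -> q <= q' -> run t p q <= run t p' q'.
Proof. by elim: t p q p' q' => [|[] t IH] p q p' q' *; rewrite /= ?IH //; lia. Qed.

Lemma ltn_run (t : seq bool) {p q p' q' : nat} :
  p < p' -> q <= q' -> run t p q < run t p' q'.
Proof. by elim: t p q p' q' => [|[] t IH] p q p' q' *; rewrite /= ?IH //; lia. Qed.

Lemma run_negb (t : seq bool) (p q : nat) : run (map negb t) p q = run t q p.
Proof. by elim: t p q => [|[] t IH] p q /=; rewrite ?IH addnC. Qed.

Lemma zS (n : nat) : z n.+1 = false :: map negb (z n).
Proof.
rewrite /z /mkseq /= -[in iota 1 n](addn0 1) iotaDl -!map_comp.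
by congr cons; apply: eq_map.
Qed.

Lemma run_leq_z {n : nat} {t : seq bool} {p q : nat} :
  size t = n -> p <= q -> run t p q <= run (z n) p q.
Proof.
elim: n t p q => [|n IH] [|[] t] p q // [size_t] le_pq; rewrite zS /= run_negb.
  exact: leq_trans (IH _ _ _ size_t (leq_addr q p)) (leq_run _ le_pq (leqnn _)).
by rewrite -[run t _ _]run_negb; apply: IH; rewrite ?size_map ?leq_addl.
Qed.

Lemma run_eq_z {n : nat} {t : seq bool} {p q : nat} :
  size t = n -> 0 < p < q -> run t p q = run (z n) p q -> t = z n.
Proof.
elim: n t p q => [|n IH] [|[] t] p q // [size_t] /andP[p_gt0 lt_pq];
  rewrite zS /= run_negb => eq_run.
  have := leq_ltn_trans (run_leq_z size_t (leq_addr q p)) (ltn_run _ lt_pq (leqnn _)).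
  by rewrite eq_run ltnn.
congr cons; rewrite -(mapK negbK t) (IH (map negb t) q (p + q)) ?size_map ?run_negb //.
lia.
Qed.

Theorem theorem3 (s : seq bool) (n : nat) :
  (s = [::] \/ last letA s = letB) ->
  (forall t : seq bool, size t = n -> P (s ++ t) <= P (s ++ z n)) /\
  (s <> [::] ->
     forall t : seq bool, size t = n -> P (s ++ t) = P (s ++ z n) -> t = z n).
Proof.
move=> s_nil_or_B.
have le_weight : weight false (rev s) <= weight true (rev s).
  by case: s_nil_or_B => [-> // | /weight_rev_lt/ltnW].
split=> [t size_t | s_ne0 t size_t eq_P].
  by rewrite -ltnS !P_cat run_leq_z.
have eq_run : run t (weight false (rev s)) (weight true (rev s))
            = run (z n) (weight false (rev s)) (weight true (rev s)).
  by rewrite -!P_cat eq_P.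
case: s_nil_or_B s_ne0 => [// | /weight_rev_lt lt_weight _].
by apply: run_eq_z size_t _ eq_run; rewrite lt_weight.
Qed.
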